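(* Let $p$ be a prime, and let $G$ and $A$ be finite abelian $p$-groups (written additively). For a $2$-cocycle $\alpha\colon G\times G\to A$ let $E(\alpha)$ be the group with underlying set $A\times G$ and multiplication $(a_1,g_1)(a_2,g_2)=(a_1+a_2+\alpha(g_1,g_2),g_1+g_2)$, and put $\eta^\alpha(g_1,g_2)=\alpha(g_1,g_2)-\alpha(g_2,g_1)$. Let $\alpha,\alpha'$ be $2$-cocycles such that the image of $\eta^\alpha$ generates $A$ and the image of $\eta^{\alpha'}$ generates $A$ (equivalently $[E(\alpha),E(\alpha)]=[E(\alpha'),E(\alpha')]=A$). An endomorphism $\varphi\in\mathrm{End}(G)$ can be lifted to a homomorphism $\phi\colon E(\alpha)\to E(\alpha')$ (i.e. a homomorphism with $\phi(a,g)\in A\times\{\varphi(g)\}$ for all $(a,g)$) if and only if there exists $\psi\in\mathrm{End}(A)$ such that $$\psi(\eta^{\alpha}(g_1,g_2))=\eta^{\alpha'}(\varphi(g_1),\varphi(g_2))\quad\text{for all } g_1,g_2\in G,\qquad \varphi^\ast([\alpha'])=\psi_\ast([\alpha])\ \text{in } H^2(G;A).$$ When these hold, each such lift $\phi$ is given by $\phi(a,g)=(\psi(a)+\mu(g),\varphi(g))$ for a unique function $\mu\colon G\to A$ satisfying $\delta\mu=\psi_\ast(\alpha)-\varphi^\ast(\alpha')$, where $(\delta\mu)(g_1,g_2)=\mu(g_1)+\mu(g_2)-\mu(g_1+g_2)$. In particular, an automorphism $\varphi\in\mathrm{Aut}(G)$ can be lifted to an isomorphism $E(\alpha)\to E(\alpha')$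 if and only if there exists $\psi\in\mathrm{Aut}(A)$ such that $\psi(\eta^{\alpha}(g_1,g_2))=\eta^{\alpha'}(\varphi(g_1),\varphi(g_2))$ for all $g_1,g_2\in G$ and $\varphi^\ast([\alpha'])=\psi_\ast([\alpha])$.
   Context: A $2$-cocycle is a function $\alpha\colon G\times G\to A$ with $\alpha(g_1,g_2)-\alpha(g_1,g_2+g_3)+\alpha(g_1+g_2,g_3)-\alpha(g_2,g_3)=0$ for all $g_i\in G$. For $\varphi\in\mathrm{End}(G)$ and $\psi\in\mathrm{End}(A)$, $(\varphi^\ast\alpha)(g_1,g_2)=\alpha(\varphi(g_1),\varphi(g_2))$ and $(\psi_\ast\alpha)(g_1,g_2)=\psi(\alpha(g_1,g_2))$; these induce the maps $\varphi^\ast,\psi_\ast$ on $H^2(G;A)$. *)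

From mathcomp Require Import all_boot all_order all_algebra.
Set Implicit Arguments. Unset Strict Implicit. Unset Printing Implicit Defensive.
Import GRing.Theory.
Local Open Scope ring_scope.

Definition is_hom (U V : zmodType) (f : U -> V) : Prop :=
  forall x y, f (x + y) = f x + f y.

Definition is_cocycle (G A : zmodType) (alpha : G -> G -> A) : Prop :=
  forall g1 g2 g3, alpha g1 g2 - alpha g1 (g2 + g3) + alpha (g1 + g2) g3
                   - alpha g2 g3 = 0.

Definition mulE (G A : zmodType) (alpha : G -> G -> A) (x y : A * G) : A * G :=
  (x.1 + y.1 + alpha x.2 y.2, x.2 + y.2).

Definition eta (G A : zmodType) (alpha : G -> G -> A) (g1 g2 : G) : A :=
  alpha g1 g2 - alpha g2 g1.

(* S generates A as a group: every subgroup containing S is all of A. *)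
Definition generates (A : zmodType) (S : A -> Prop) : Prop :=
  forall P : A -> Prop,
    P 0 -> (forall x y, P x -> P y -> P (x - y)) -> (forall x, S x -> P x) ->
    forall a, P a.

Definition image_eta (G A : zmodType) (alpha : G -> G -> A) : A -> Prop :=
  fun a => exists g1 g2, a = eta alpha g1 g2.

Definition pullback (G A : zmodType) (phi : G -> G) (alpha : G -> G -> A) :=
  fun g1 g2 => alpha (phi g1) (phi g2).
Definition pushforward (G A : zmodType) (psi : A -> A) (alpha : G -> G -> A) :=
  fun g1 g2 => psi (alpha g1 g2).

Definition delta (G A : zmodType) (mu : G -> A) : G -> G -> A :=
  fun g1 g2 => mu g1 + mu g2 - mu (g1 + g2).

Definition same_class (G A : zmodType) (beta gamma : G -> G -> A) : Prop :=
  exists mu : G -> A, forall g1 g2, beta g1 g2 - gamma g1 g2 = delta mu g1 g2.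

Definition is_lift (G A : zmodType) (alpha alpha' : G -> G -> A)
    (phi : G -> G) (Phi : A * G -> A * G) : Prop :=
  (forall x y, Phi (mulE alpha x y) = mulE alpha' (Phi x) (Phi y)) /\
  (forall x, (Phi x).2 = phi x.2).

Definition eta_compat (G A : zmodType) (alpha alpha' : G -> G -> A)
    (phi : G -> G) (psi : A -> A) : Prop :=
  forall g1 g2, psi (eta alpha g1 g2) = eta alpha' (phi g1) (phi g2).

From mathcomp Require Import all_boot all_order all_algebra.
From Stdlib Require Import FunctionalExtensionality.
Import GRing.Theory.
Local Open Scope ring_scope.

(* A lift [Phi] of [phi] is forced to have the shape
   [(a, g) |-> (h a + mu g, phi g)] with [h] additive: [h] is [Phi] on the
   central copy of [A].  Such a map is a homomorphism exactly when
   [delta mu = h_* alpha - phi^* alpha'], so lifts with linear part [h] exist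
   iff [phi^*[alpha'] = h_*[alpha]]; the eta-condition then comes for free,
   since coboundaries are symmetric.  As the values of [eta alpha] generate
   [A], the eta-condition determines [h], whence the uniqueness of [mu]. *)

Lemma addr_eq_iff_subr_eq (V : zmodType) (x y z t : V) :
  x + t = z + y <-> x - y = z - t.
Proof.
have E : (x - y == z - t) = (x + t == z + y).
  by rewrite subr_eq addrAC -subr_eq opprK.
by split=> /eqP; [rewrite -E | rewrite E] => /eqP.
Qed.

Section Homomorphisms.
Context {U V : zmodType} {f : U -> V}.
Hypothesis f_hom : is_hom f.

Lemma is_hom0 : f 0 = 0.
Proof. by apply: (addrI (f 0)); rewrite -f_hom !addr0. Qed.

Lemma is_homB x y : f (x - y) = f x - f y.
Proof. by apply: (addIr (f y)); rewrite -f_hom !subrK. Qed.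

End Homomorphisms.

Section Cochains.
Context {G A : zmodType}.
Implicit Types (alpha beta gamma : G -> G -> A) (mu : G -> A).

Lemma cocycle_x0 {alpha} : is_cocycle alpha -> forall g, alpha g 0 = alpha 0 0.
Proof.
move=> alpha_cocycle g; apply: subr0_eq.
by have := alpha_cocycle g 0 0; rewrite !addr0 subrr add0r.
Qed.

Lemma delta_sym mu g1 g2 : delta mu g1 g2 = delta mu g2 g1.
Proof. by rewrite /delta [mu g1 + _]addrC [g1 + _]addrC. Qed.

Lemma same_class_sym beta gamma :
  same_class beta gamma -> same_class gamma beta.
Proof.
case=> mu class_mu; exists (fun g => - mu g) => g1 g2.
by rewrite -opprB class_mu /delta !opprD !opprK.
Qed.

Lemma eta_same_class beta gamma :
  same_class beta gamma -> forall g1 g2, eta beta g1 g2 = eta gamma g1 g2.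
Proof.
case=> mu class_mu g1 g2.
have beta_split x y : beta x y = delta mu x y + gamma x y.
  by rewrite -class_mu subrK.
by rewrite /eta !beta_split (delta_sym mu g2) opprD addrACA subrr add0r.
Qed.

End Cochains.

Section Lifts.
Context {G A : zmodType} {alpha alpha' : G -> G -> A} {phi : G -> G}.
Hypothesis phi_hom : is_hom phi.

Definition lift_map (psi : A -> A) (mu : G -> A) (x : A * G) : A * G :=
  (psi x.1 + mu x.2, phi x.2).

Lemma eta_pushforward psi g1 g2 :
  is_hom psi -> eta (pushforward psi alpha) g1 g2 = psi (eta alpha g1 g2).
Proof. by move=> psi_hom; rewrite /eta /pushforward (is_homB psi_hom). Qed.

Lemma same_class_eta_compat psi : is_hom psi ->
  same_class (pullback phi alpha') (pushforward psi alpha) ->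
  eta_compat alpha alpha' phi psi.
Proof.
move=> psi_hom /eta_same_class eta_eq g1 g2.
by rewrite -eta_pushforward // -eta_eq.
Qed.

Lemma is_lift_mapP {psi mu} : is_hom psi ->
  is_lift alpha alpha' phi (lift_map psi mu) <->
  forall g1 g2, pushforward psi alpha g1 g2 - pullback phi alpha' g1 g2
                = delta mu g1 g2.
Proof.
move=> psi_hom.
have cobP g1 g2 : psi (alpha g1 g2) + mu (g1 + g2)
                    = mu g1 + mu g2 + alpha' (phi g1) (phi g2) <->
                  pushforward psi alpha g1 g2 - pullback phi alpha' g1 g2
                    = delta mu g1 g2.
  exact: addr_eq_iff_subr_eq.
split=> [[lift_mul _] g1 g2 | cob].
  apply/cobP; have := congr1 fst (lift_mul (0, g1) (0, g2)).
  by rewrite /= !add0r (is_hom0 psi_hom) !add0r.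
split=> [[a1 g1] [a2 g2] | //]; rewrite /lift_map /mulE /= phi_hom !psi_hom.
congr (_, _); rewrite [psi a1 + mu g1 + _]addrACA -[RHS]addrA -[LHS]addrA.
by rewrite (cobP g1 g2).2.
Qed.

Lemma lift_map_existsP {psi} : is_hom psi ->
  (exists mu, is_lift alpha alpha' phi (lift_map psi mu)) <->
  same_class (pullback phi alpha') (pushforward psi alpha).
Proof.
move=> psi_hom.
split=> [[mu /(is_lift_mapP psi_hom) cob] | /same_class_sym [mu cob]].
  by apply: same_class_sym; exists mu.
by exists mu; apply/(is_lift_mapP psi_hom).
Qed.

Lemma eta_compat_unique {psi1 psi2} :
  generates (image_eta alpha) -> is_hom psi1 -> is_hom psi2 ->
  eta_compat alpha alpha' phi psi1 -> eta_compat alpha alpha' phi psi2 ->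
  psi1 = psi2.
Proof.
move=> gen psi1_hom psi2_hom eta1 eta2; apply: functional_extensionality.
apply: gen => [|a b eq_a eq_b|_ [g1 [g2 ->]]].
- by rewrite !is_hom0.
- by rewrite !is_homB // eq_a eq_b.
- by rewrite eta1 eta2.
Qed.

(* The linear part [h] is [Phi] on the central copy [a |-> (a - alpha 0 0, 0)]
   of [A] in [E(alpha)], read back through the corresponding copy in
   [E(alpha')]. *)
Lemma lift_decomposition {Phi} :
  is_cocycle alpha -> is_cocycle alpha' -> is_lift alpha alpha' phi Phi ->
  exists h mu, is_hom h /\ Phi = lift_map h mu.
Proof.
move=> alpha_cocycle alpha'_cocycle [lift_mul lift_snd].
pose h b := (Phi (b - alpha 0 0, 0)).1 + alpha' 0 0.
have lift_fstD a b g : (Phi (a + b, g)).1 = (Phi (a, g)).1 + h b.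
  have := congr1 fst (lift_mul (a, g) (b - alpha 0 0, 0)).
  rewrite /mulE /= (cocycle_x0 alpha_cocycle) addr0 addrA subrK !lift_snd /=.
  by rewrite (is_hom0 phi_hom) (cocycle_x0 alpha'_cocycle) addrA => ->.
have h_hom : is_hom h by move=> a b; rewrite /h addrAC lift_fstD addrAC.
exists h, (fun g => (Phi (0, g)).1); split=> //.
apply: functional_extensionality => -[a g].
rewrite /lift_map [Phi _]surjective_pairing lift_snd.
by rewrite -{1}(add0r a) lift_fstD addrC.
Qed.

Lemma lift_decomposition_class {Phi} :
  is_cocycle alpha -> is_cocycle alpha' -> is_lift alpha alpha' phi Phi ->
  exists h mu, [/\ is_hom h, Phi = lift_map h mu,
    eta_compat alpha alpha' phi h &
    same_class (pullback phi alpha') (pushforward h alpha)].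
Proof.
move=> alpha_cocycle alpha'_cocycle lift.
have [h [mu [h_hom Phi_eq]]] :=
  lift_decomposition alpha_cocycle alpha'_cocycle lift.
have class_h : same_class (pullback phi alpha') (pushforward h alpha).
  by apply/(lift_map_existsP h_hom); exists mu; rewrite -Phi_eq.
by exists h, mu; split=> //; apply: same_class_eta_compat.
Qed.

End Lifts.

Arguments lift_map {G A} phi psi mu x.

Lemma bijective_lift_map {G A : finZmodType} {phi : G -> G} {psi : A -> A}
    (mu : G -> A) :
  bijective phi -> bijective (lift_map phi psi mu) <-> bijective psi.
Proof.
move=> phi_bij; split=> [lift_bij | psi_bij]; apply: injF_bij.
  move=> a b eq_ab; have := @bij_inj _ _ _ lift_bij (a, 0) (b, 0).
  by rewrite /lift_map /= eq_ab => /(_ erefl) [].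
move=> [a g] [b k] [/= eq_fst /(bij_inj phi_bij) eq_gk]; subst k.
by move/addIr/(bij_inj psi_bij): eq_fst => ->.
Qed.

Theorem proposition1p1 (p : nat) (G A : finZmodType)
    (alpha alpha' : G -> G -> A) :
  prime p -> p.-nat #|G| -> p.-nat #|A| ->
  is_cocycle alpha -> is_cocycle alpha' ->
  generates (image_eta alpha) -> generates (image_eta alpha') ->
  (forall phi : G -> G, is_hom phi ->
     ((exists Phi : A * G -> A * G, is_lift alpha alpha' phi Phi) <->
      (exists psi : A -> A, [/\ is_hom psi, eta_compat alpha alpha' phi psi &
          same_class (pullback phi alpha') (pushforward psi alpha)])))
  /\
  (forall (phi : G -> G) (psi : A -> A), is_hom phi -> is_hom psi ->
     eta_compat alpha alpha' phi psi ->
     same_class (pullback phi alpha') (pushforward psi alpha) ->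
     forall Phi : A * G -> A * G, is_lift alpha alpha' phi Phi ->
       exists! mu : G -> A,
         (forall a g, Phi (a, g) = (psi a + mu g, phi g)) /\
         (forall g1 g2, delta mu g1 g2 =
            pushforward psi alpha g1 g2 - pullback phi alpha' g1 g2))
  /\
  (forall phi : G -> G, is_hom phi -> bijective phi ->
     ((exists Phi : A * G -> A * G, is_lift alpha alpha' phi Phi /\ bijective Phi) <->
      (exists psi : A -> A, [/\ is_hom psi, bijective psi,
          eta_compat alpha alpha' phi psi &
          same_class (pullback phi alpha') (pushforward psi alpha)]))).
Proof.
move=> _ _ _ alpha_cocycle alpha'_cocycle gen _.
have lift_class phi Phi : is_hom phi -> is_lift alpha alpha' phi Phi -> _ :=
  fun phi_hom => lift_decomposition_class phi_hom alpha_cocycle alpha'_cocycle.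
split; [|split].
- move=> phi phi_hom.
  split=> [[Phi /(lift_class _ _ phi_hom)] | [psi [psi_hom _ class_psi]]].
    by case=> h [mu [h_hom _ eta_h class_h]]; exists h.
  have [mu lift] := (lift_map_existsP phi_hom psi_hom).2 class_psi.
  by exists (lift_map phi psi mu).
- move=> phi psi phi_hom psi_hom eta_psi _ Phi lift.
  have [h [mu [h_hom Phi_eq eta_h _]]] := lift_class _ _ phi_hom lift.
  have h_psi := eta_compat_unique gen h_hom psi_hom eta_h eta_psi.
  subst Phi h; exists mu; split.
    by split=> // g1 g2; rewrite ((is_lift_mapP phi_hom psi_hom).1 lift).
  move=> mu' [lift_mu' _]; apply: functional_extensionality => g.
  by have [] := lift_mu' 0 g; rewrite (is_hom0 psi_hom) !add0r.
- move=> phi phi_hom phi_bij.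
  split=> [[Phi [/(lift_class _ _ phi_hom) Phi_dec Phi_bij]]
          | [psi [psi_hom psi_bij _ class_psi]]].
    have [h [mu [h_hom Phi_eq eta_h class_h]]] := Phi_dec.
    exists h; split=> //.
    by apply/(bijective_lift_map mu phi_bij); rewrite -Phi_eq.
  have [mu lift] := (lift_map_existsP phi_hom psi_hom).2 class_psi.
  exists (lift_map phi psi mu); split=> //.
  exact/(bijective_lift_map mu phi_bij).
Qed.
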